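(* Let Assumption 1 hold, let $\{\mathbf x_k\}$ be generated by Algorithm MADS-PIP, let $\bar{\mathbf x}$ be an end-path point and let $\bar{\mathbf d}$ be a path-refining direction for $\bar{\mathbf x}$. If $f$, $c^{int}$ and $c^{ext}$ are Lipschitz continuous near $\bar{\mathbf x}$, then $(c^{ext})^\circ(\bar{\mathbf x};\bar{\mathbf d})\ge0$.
   Context: Consider the problem of minimizing $f(\mathbf x)$ over $\mathbf x\in\mathbb R^n$ subject to $g_\ell(\mathbf x)\le 0$ ($\ell=1,\dots,m$) and $h_j(\mathbf x)=0$ ($j=1,\dots,p$), where $f,g_\ell,h_j:\mathbb R^n\to\mathbb R\cup\{+\infty\}$. The index set $\{1,\dots,m\}$ is partitioned into disjoint sets $\mathcal G^{int}$ and $\mathcal G^{ext}$, fixed throughout. Define $\Omega^{int}=\{\mathbf x: g_\ell(\mathbf x)\le 0\ \forall\ell\in\mathcal G^{int}\}$, $\Omega^{ext}=\{\mathbf x: g_\ell(\mathbf x)\le0\ \forall \ell\in\mathcal G^{ext},\ h_j(\mathbf x)=0\ \forall j\}$, $\Omega=\Omega^{int}\cap\Omega^{ext}$. Let $\phi^{prox}(\mathbf x)=\max_{\ell\in\mathcal G^{int}}g_\ell(\mathbf x)$; let $c^{int}(\mathbf x)=-\prod_{\ell\in\mathcal G^{int}}\min\{1,-g_\ell(\mathbf x)\}$ if $g_\ell(\mathbf x)\le0$ for all $\ell\in\mathcal G^{int}$, and $c^{int}(\mathbf x)=\phi^{prox}(\mathbf x)$ otherwise; let $c^{ext}(\mathbf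 x)=\sum_{\ell\in\mathcal G^{ext}}(\max\{0,g_\ell(\mathbf x)\})^2+\sum_{j=1}^p h_j(\mathbf x)^2$. (If $\mathcal G^{int}=\emptyset$, then $c^{int}\equiv-1$ and $[\phi^{prox}]^2$ is read as $+\infty$.) For $\rho>0$ the merit function is $z(\mathbf x;\rho)=f(\mathbf x)-\rho\log(-c^{int}(\mathbf x))+\frac1\rho c^{ext}(\mathbf x)$ if $c^{int}(\mathbf x)<0$, and $z(\mathbf x;\rho)=+\infty$ otherwise. Algorithm MADS-PIP: inputs $\mathbf x_0$ with $g_\ell(\mathbf x_0)<0$ for all $\ell\in\mathcal G^{int}$ and $z(\mathbf x_0;\rho_0)<+\infty$, $\rho_0>0$, $\theta_\rho\in(0,1)$, $\Delta_0>0$, $\theta_\Delta\in(0,1)\cap\mathbb Q$, $\beta>1$. For $k=0,1,2,\dots$ (the algorithm never stops): mesh $\mathcal M_k=\{\mathbf x_k+\delta_k\mathbf u:\mathbf u\in\mathbb Z^n\}$ with $\delta_k=\min\{\Delta_k,\Delta_k^2/\Delta_0\}$; frame $\mathcal F_k=\{\mathbf x\in\mathcal M_k:\|\mathbf x-\mathbf x_k\|\le\Delta_k\}$. Search: a finite (possibly empty) set $\mathcal S_k\subset\mathcal M_k$ is examined; if some $\mathbf s\in\mathcal S_k$ satisfies $z(\mathbf s;\rho_k)<z(\mathbf x_k;\rho_k)$, set $\mathbf x_{k+1}=\mathbf s$, $\Delta_{k+1}=\Delta_k/\theta_\Delta$, $\rho_{k+1}=\rho_k$ (successful iteration). Otherwise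 poll: choose a finite set $\mathcal D_k$ of nonzero directions with $\mathbf x_k+\mathbf d\in\mathcal F_k$ for all $\mathbf d\in\mathcal D_k$; if some $\mathbf d\in\mathcal D_k$ satisfies $z(\mathbf x_k+\mathbf d;\rho_k)<z(\mathbf x_k;\rho_k)$, set $\mathbf x_{k+1}=\mathbf x_k+\mathbf d$, $\Delta_{k+1}=\Delta_k/\theta_\Delta$, $\rho_{k+1}=\rho_k$ (successful). Otherwise the iteration is unsuccessful: $\mathbf x_{k+1}=\mathbf x_k$, $\Delta_{k+1}=\theta_\Delta\Delta_k$, and $\rho_{k+1}=\theta_\rho\rho_k$ if $\Delta_{k+1}\le\min\{\rho_k^\beta,[\phi^{prox}(\mathbf x_k)]^2\}$, else $\rho_{k+1}=\rho_k$. The path-following index set is $\mathcal K_\rho=\{k:\rho_{k+1}<\rho_k\}$ and $\{\mathbf x_k\}_{k\in\mathcal K_\rho}$ is the path-following subsequence. A point $\bar{\mathbf x}$ is an end-path point if there is an infinite $\mathcal K_\rho^{x}\subseteq\mathcal K_\rho$ with $\lim_{k\in\mathcal K_\rho^x}\mathbf x_k=\bar{\mathbf x}$; $\{\mathbf x_k\}_{k\in\mathcal K^x_\rho}$ is then an end-path subsequence. Assumption 1: for every $\alpha\in\mathbb R$ the level set $\{\mathbf x\in\mathbb R^n: f(\mathbf x)\le\alpha\}$ is bounded. Path-refining direction: $\bar{\mathbf d}\in\mathbb R^n$ is a path-refining direction for the end-path point $\bar{\mathbf x}$ if there exist an infinite index set $\mathcal K^x_\rho\subseteq\mathcal K_\rho$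 with $\lim_{k\in\mathcal K^x_\rho}\mathbf x_k=\bar{\mathbf x}$ and poll directions $\mathbf d_k\in\mathcal D_k$ ($k\in\mathcal K^x_\rho$) such that $\lim_{k\in\mathcal K^x_\rho}\mathbf d_k/\|\mathbf d_k\|=\bar{\mathbf d}$ and $c^{int}(\mathbf x_k+\mathbf d_k)\le c^{int}(\mathbf x_k)$ for all $k\in\mathcal K^x_\rho$. Clarke generalized directional derivative of $c$ at $\mathbf x$ in direction $\mathbf d$: $c^\circ(\mathbf x;\mathbf d)=\limsup_{\mathbf y\to\mathbf x,\ t\searrow0}\frac{c(\mathbf y+t\mathbf d)-c(\mathbf y)}{t}$. *)

(* R : realType, vectors in R^n are row vectors 'rV[R]_n,
   extended-real values \bar R model R \cup {+oo}. *)
From HB Require Import structures.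
From mathcomp Require Import all_boot all_order all_algebra.
From mathcomp Require Import all_classical all_reals all_analysis.
Set Implicit Arguments. Unset Strict Implicit. Unset Printing Implicit Defensive.
Import Order.TTheory GRing.Theory Num.Theory.
Local Open Scope ring_scope.

Section MadsPip.
Context {R : realType} {n m p : nat}.

Notation vec := 'rV[R]_n.

Definition enorm (x : vec) : R := Num.sqrt (\sum_(i < n) x 0 i ^+ 2).

Definition vcvg (u : nat -> vec) (l : vec) : Prop :=
  forall e : R, 0 < e -> exists N : nat, forall j, (N <= j)%N -> enorm (u j - l) < e.

Variables (f : vec -> \bar R) (g : 'I_m -> vec -> \bar R) (h : 'I_p -> vec -> \bar R)
          (Gint : {set 'I_m}).
(* G^ext is the complement ~: Gint *)

Definition phiprox (x : vec) : \bar R := \big[Order.max/-oo%E]_(l in Gint) g l x.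

Definition phiprox_sq (x : vec) : \bar R :=
  if #|Gint| == 0%N then +oo%E else (phiprox x * phiprox x)%E.

Definition cint (x : vec) : \bar R :=
  if [forall l in Gint, (g l x <= 0)%E]
  then (- \prod_(l in Gint) Num.min 1 (- fine (g l x)))%:E
  else phiprox x.

Definition cext (x : vec) : \bar R :=
  ((\sum_(l in ~: Gint) (Order.max 0 (g l x)) * (Order.max 0 (g l x)))
   + \sum_(j < p) (h j x * h j x))%E.

Definition zmerit (rho : R) (x : vec) : \bar R :=
  if (cint x < 0)%E
  then (f x + (- (rho * ln (- fine (cint x))))%:E + (rho^-1)%:E * cext x)%E
  else +oo%E.

Definition mesh_size (Delta0 Delta : R) : R := Num.min Delta (Delta ^+ 2 / Delta0).

Definition in_mesh (delta : R) (xk x : vec) : Prop :=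
  exists u : 'rV[int]_n, x = xk + delta *: map_mx (fun z : int => z%:~R) u.

Definition in_frame (delta Delta : R) (xk x : vec) : Prop :=
  in_mesh delta xk x /\ enorm (x - xk) <= Delta.

Definition mads_pip (x0 : vec) (rho0 theta_rho Delta0 theta_Delta beta : R)
  (x : nat -> vec) (Delta rho : nat -> R) (S D : nat -> seq vec) : Prop :=
  (forall l, l \in Gint -> (g l x0 < 0)%E) /\
  (zmerit rho0 x0 < +oo)%E /\
  0 < rho0 /\ (0 < theta_rho < 1) /\ 0 < Delta0 /\
  (0 < theta_Delta < 1) /\ (exists q : rat, theta_Delta = ratr q) /\
  1 < beta /\
  x 0%N = x0 /\ Delta 0%N = Delta0 /\ rho 0%N = rho0 /\
  (forall k : nat,
        let delta := mesh_size Delta0 (Delta k) in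
        (forall s, s \in S k -> in_mesh delta (x k) s) /\
        ( (* successful search *)
          (exists2 s, s \in S k & (zmerit (rho k) s < zmerit (rho k) (x k))%E
             /\ x k.+1 = s /\ Delta k.+1 = Delta k / theta_Delta /\ rho k.+1 = rho k)
          \/
          (* poll *)
          ((forall s, s \in S k -> ~ (zmerit (rho k) s < zmerit (rho k) (x k))%E) /\
           (forall d, d \in D k -> d != 0 /\ in_frame delta (Delta k) (x k) (x k + d)) /\
           ( (* successful poll *)
             (exists2 d, d \in D k &
                (zmerit (rho k) (x k + d) < zmerit (rho k) (x k))%E
                /\ x k.+1 = x k + d /\ Delta k.+1 = Delta k / theta_Delta
                /\ rho k.+1 = rho k)
             \/
             (* unsuccessful iteration *)
             ((forall d, d \in D k ->
                 ~ (zmerit (rho k) (x k + d) < zmerit (rho k) (x k))%E) /\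
              x k.+1 = x k /\ Delta k.+1 = theta_Delta * Delta k /\
              rho k.+1 = (if ((Delta k.+1)%:E <=
                               Order.min ((powR (rho k) beta)%:E) (phiprox_sq (x k)))%E
                          then theta_rho * rho k else rho k)))))).

Definition path_following (rho : nat -> R) (k : nat) : Prop := rho k.+1 < rho k.

(* end-path point: limit of x_k along an infinite subset of K_rho, the infinite
   index set being enumerated by a strictly increasing sigma *)
Definition end_path_point (rho : nat -> R) (x : nat -> vec) (xbar : vec) : Prop :=
  exists sigma : nat -> nat,
    (forall j, (sigma j < sigma j.+1)%N) /\
    (forall j, path_following rho (sigma j)) /\
    vcvg (fun j => x (sigma j)) xbar.

Definition path_refining (rho : nat -> R) (x : nat -> vec) (D : nat -> seq vec)
  (xbar dbar : vec) : Prop :=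
  exists (sigma : nat -> nat) (d : nat -> vec),
    (forall j, (sigma j < sigma j.+1)%N) /\
    (forall j, path_following rho (sigma j)) /\
    vcvg (fun j => x (sigma j)) xbar /\
    (forall j, d j \in D (sigma j)) /\
    vcvg (fun j => (enorm (d j))^-1 *: d j) dbar /\
    (forall j, (cint (x (sigma j) + d j) <= cint (x (sigma j)))%E).

End MadsPip.

(* Assumption 1: all level sets of f are bounded *)
Definition bounded_level_sets {R : realType} {n : nat} (f : 'rV[R]_n -> \bar R) : Prop :=
  forall alpha : R, exists M : R, forall x, (f x <= alpha%:E)%E -> enorm x <= M.

Definition lipschitz_near {R : realType} {n : nat} (c : 'rV[R]_n -> \bar R)
  (xbar : 'rV[R]_n) : Prop :=
  exists eps : R, 0 < eps /\ exists L : R,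
    forall y y', enorm (y - xbar) < eps -> enorm (y' - xbar) < eps ->
      c y \is a fin_num /\ `|fine (c y) - fine (c y')| <= L * enorm (y - y').

(* Clarke generalized directional derivative
   c°(x; d) = limsup_{y -> x, t \searrow 0} (c(y + t d) - c(y)) / t,
   written as inf over delta > 0 of the sup over ||y - x|| < delta, 0 < t < delta. *)
Definition clarke_dd {R : realType} {n : nat} (c : 'rV[R]_n -> \bar R)
  (x d : 'rV[R]_n) : \bar R :=
  ereal_inf [set ereal_sup [set r : \bar R | exists (y : 'rV[R]_n) (t : R),
                               [/\ enorm (y - x) < delta, 0 < t, t < delta &
                                   r = ((c (y + t *: d)%R - c y) * (t^-1)%:E)%E]]
            | delta in [set delta : R | 0 < delta]].

From HB Require Import structures.
From mathcomp Require Import all_boot all_order all_algebra.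
From mathcomp Require Import all_classical all_reals all_analysis.
From mathcomp Require Import ring lra.
Import Order.TTheory GRing.Theory Num.Theory.
Local Open Scope classical_set_scope.
Local Open Scope ring_scope.

(* At a path-following iteration k the poll failed, so z(x_k; rho_k) <= z(x_k + d_k; rho_k).
   As c^int(x_k + d_k) <= c^int(x_k), the barrier term only favours the trial point, hence
   c^ext(x_k + d_k) - c^ext(x_k) >= -rho_k (f(x_k + d_k) - f(x_k)) >= -rho_k L_f ||d_k||.
   Moving the trial point to x_k + ||d_k|| dbar costs at most
   L_c ||d_k|| ||d_k / ||d_k|| - dbar|| by Lipschitz continuity of c^ext, so the difference
   quotients of c^ext at x_k in direction dbar with step ||d_k|| are bounded below by
   -rho_k L_f - L_c ||d_k / ||d_k|| - dbar||.  Along the path-following subsequence rho_k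
   decreases geometrically to 0 and ||d_k|| <= Delta_k <= rho_k^beta / theta_Delta, so the
   steps and the lower bounds both tend to 0. *)

Lemma mulr_le_of_lt_divD1 (R : realFieldType) (x a c : R) :
  0 <= x -> 0 <= a -> x < c / (a + 1) -> x * a <= c.
Proof. by move=> x0 a0; rewrite ltr_pdivlMr ?ltr_wpDl //; nra. Qed.

Section EuclideanNorm.
Context {R : realType} {n : nat}.
Implicit Types (u v : 'rV[R]_n) (a b : 'I_n -> R).

Lemma enorm_ge0 v : 0 <= enorm v.
Proof. exact: sqrtr_ge0. Qed.

Lemma enormZ (c : R) v : enorm (c *: v) = `|c| * enorm v.
Proof.
rewrite /enorm -sqrtr_sqr -sqrtrM ?sqr_ge0 // mulr_sumr.
by congr Num.sqrt; apply: eq_bigr => i _; rewrite mxE exprMn.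
Qed.

Lemma enorm_distC u v : enorm (u - v) = enorm (v - u).
Proof. by rewrite -opprB -scaleN1r enormZ normrN normr1 mul1r. Qed.

Lemma enorm_gt0 v : v != 0 -> 0 < enorm v.
Proof.
move=> v0; rewrite lt_neqAle enorm_ge0 andbT eq_sym; apply/negP => /eqP E.
move/negP: v0; apply; apply/eqP/rowP => i; rewrite mxE.
have S0 : \sum_(i < n) v 0 i ^+ 2 = 0.
  apply/eqP; rewrite eq_le sumr_ge0 ?andbT; last by move=> *; exact: sqr_ge0.
  by rewrite -sqrtr_eq0; apply/eqP.
have := @psumr_eq0P _ _ xpredT (fun i => v 0 i ^+ 2) (fun i _ => sqr_ge0 _) S0 i isT.
by move/eqP; rewrite sqrf_eq0 => /eqP.
Qed.

Lemma cauchy_schwarz_sum a b :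
  \sum_i a i * b i <= Num.sqrt (\sum_i a i ^+ 2) * Num.sqrt (\sum_i b i ^+ 2).
Proof.
set A := \sum_i a i ^+ 2; set B := \sum_i b i ^+ 2; set P := \sum_i a i * b i.
have A0 : 0 <= A by apply: sumr_ge0 => i _; exact: sqr_ge0.
have B0 : 0 <= B by apply: sumr_ge0 => i _; exact: sqr_ge0.
have [B_eq0|B_neq0] := eqVneq B 0.
  have b0 i : b i = 0.
    apply/eqP; rewrite -sqrf_eq0; apply/eqP.
    exact: (psumr_eq0P (fun i _ => sqr_ge0 (b i)) B_eq0).
  by rewrite /P big1 ?mulr_ge0 ?sqrtr_ge0 // => i _; rewrite b0 mulr0.
have B_gt0 : 0 < B by rewrite lt_neqAle eq_sym B_neq0 B0.
have expand c : \sum_i (a i - c * b i) ^+ 2 = A - (c * P) *+ 2 + c ^+ 2 * B.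
  rewrite /A /B /P !mulr_sumr -sumrMnl -sumrB -big_split /=.
  by apply: eq_bigr => i _; ring.
have PAB : P ^+ 2 <= A * B.
  have : 0 <= A - P ^+ 2 / B.
    have <- : \sum_i (a i - P / B * b i) ^+ 2 = A - P ^+ 2 / B by rewrite expand; field.
    by apply: sumr_ge0 => i _; exact: sqr_ge0.
  by rewrite subr_ge0 ler_pdivrMr.
apply: le_trans (ler_norm P) _.
by rewrite -sqrtrM // -sqrtr_sqr ler_sqrt ?mulr_ge0.
Qed.

Lemma enormD u v : enorm (u + v) <= enorm u + enorm v.
Proof.
rewrite /enorm.
have U0 : 0 <= \sum_(i < n) u 0 i ^+ 2 by apply: sumr_ge0 => i _; exact: sqr_ge0.
have V0 : 0 <= \sum_(i < n) v 0 i ^+ 2 by apply: sumr_ge0 => i _; exact: sqr_ge0.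
rewrite -[X in _ <= X]ger0_norm ?addr_ge0 ?sqrtr_ge0 // -sqrtr_sqr ler_sqrt ?sqr_ge0 //.
have -> : \sum_(i < n) (u + v) 0 i ^+ 2 =
  \sum_(i < n) u 0 i ^+ 2 + (\sum_(i < n) u 0 i * v 0 i) *+ 2 + \sum_(i < n) v 0 i ^+ 2.
  by rewrite -sumrMnl -!big_split /=; apply: eq_bigr => i _; rewrite mxE; ring.
by rewrite sqrrD !sqr_sqrtr // lerD2r lerD2l lerMn2r /= cauchy_schwarz_sum.
Qed.

Lemma vcvg_near (u : nat -> 'rV[R]_n) l :
  vcvg u l -> forall e, 0 < e -> \forall j \near \oo, enorm (u j - l) < e.
Proof. by move=> ul e e0; have [N uN] := ul e e0; exists N. Qed.

End EuclideanNorm.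

Section ClarkeDerivative.
Context {R : realType} {n : nat}.

Lemma clarke_dd_ge0 (c : 'rV[R]_n -> \bar R) (x d : 'rV[R]_n)
    (y : nat -> 'rV[R]_n) (t : nat -> R) :
  (forall e, 0 < e -> \forall j \near \oo,
     [/\ enorm (y j - x) < e, 0 < t j, t j < e &
         ((- e)%:E <= (c (y j + t j *: d)%R - c (y j)) * (t j)^-1%:E)%E]) ->
  (0 <= clarke_dd c x d)%E.
Proof.
move=> approx; apply/ereal_infP => _ [delta /= delta0 <-].
apply/lee_addgt0Pr => e e0.
have eps0 : 0 < Num.min delta e by rewrite lt_min delta0 e0.
have [j [+ tj0 + qj]] := filter_ex (approx _ eps0).
rewrite !lt_min => /andP[yj _] /andP[tj _].
apply: le_trans (leeD (_ : (- e)%:E <= _)%E (lexx e%:E)); first by rewrite -EFinD addNr.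
apply: le_trans (ereal_sup_ubound _).
  by apply: le_trans qj; rewrite lee_fin lerN2 ge_min lexx orbT.
by exists (y j), (t j).
Qed.

(* [lipschitz_near c xbar] unfolds to
   [exists r, 0 < r /\ exists L, lipschitz_on_ball c xbar r L]. *)
Definition lipschitz_on_ball (c : 'rV[R]_n -> \bar R) (xbar : 'rV[R]_n) (r L : R) : Prop :=
  forall y y', enorm (y - xbar) < r -> enorm (y' - xbar) < r ->
    c y \is a fin_num /\ `|fine (c y) - fine (c y')| <= L * enorm (y - y').

Lemma lipschitz_on_ball_le c xbar r r' L :
  lipschitz_on_ball c xbar r L -> r' <= r -> lipschitz_on_ball c xbar r' L.
Proof. by move=> cL r'r y y' hy hy'; apply: cL; apply: lt_le_trans r'r. Qed.

End ClarkeDerivative.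

Section MeritFunction.
Context {R : realType} {n m p : nat}.
Context {f : 'rV[R]_n -> \bar R} {g : 'I_m -> 'rV[R]_n -> \bar R}
  {h : 'I_p -> 'rV[R]_n -> \bar R} {Gint : {set 'I_m}}.
Local Notation cint := (cint g Gint).
Local Notation cext := (cext g h Gint).
Local Notation z := (zmerit f g h Gint).

(* A negative c^int can only come from its first branch: otherwise some g_l is positive
   and then so is phi^prox. *)
Lemma cint_lt0_fin_num y : (cint y < 0)%E -> cint y \is a fin_num.
Proof.
rewrite /cint; case: ifP => // /negbT /forall_inPn [l lG] gl_pos phi_neg.
have := le_lt_trans (le_bigmax_cond -oo%E (fun i => g i y) lG) phi_neg.
by move/ltW; rewrite (negbTE gl_pos).
Qed.

Lemma zmerit_le_cext {rho : R} {y y'} : 0 < rho ->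
  (cint y' <= cint y)%E -> (cint y < 0)%E ->
  f y \is a fin_num -> f y' \is a fin_num -> cext y \is a fin_num -> cext y' \is a fin_num ->
  (z rho y <= z rho y')%E ->
  fine (cext y) - fine (cext y') <= rho * (fine (f y') - fine (f y)).
Proof.
move=> rho0 cint_le cint_neg fy fy' ey ey'.
have cint'_neg := le_lt_trans cint_le cint_neg.
rewrite /zmerit cint_neg cint'_neg.
rewrite -(fineK fy) -(fineK fy') -(fineK ey) -(fineK ey') -!EFinM -!EFinD lee_fin.
have fc := cint_lt0_fin_num _ cint_neg; have fc' := cint_lt0_fin_num _ cint'_neg.
have cint_le_r : fine (cint y') <= fine (cint y) by rewrite -lee_fin !fineK.
have cint_neg_r : fine (cint y) < 0 by rewrite -lte_fin fineK.
have barrier : rho * ln (- fine (cint y)) <= rho * ln (- fine (cint y')).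
  by rewrite ler_pM2l // ler_ln ?posrE; lra.
move=> z_le.
have scaled : rho^-1 * fine (cext y) - rho^-1 * fine (cext y') <= fine (f y') - fine (f y).
  by lra.
have -> : fine (cext y) - fine (cext y') =
          rho * (rho^-1 * fine (cext y) - rho^-1 * fine (cext y')).
  by rewrite mulrBr !mulrA mulfV ?gt_eqF // !mul1r.
by rewrite ler_pM2l.
Qed.

Lemma cext_quotient_lower {rho r Lf Lc : R} {xbar y d dbar : 'rV[R]_n} :
  0 < rho -> d != 0 ->
  lipschitz_on_ball f xbar r Lf -> lipschitz_on_ball cext xbar r Lc ->
  enorm (y - xbar) < r -> enorm (y + d - xbar) < r ->
  enorm (y + enorm d *: dbar - xbar) < r ->
  (cint (y + d) <= cint y)%E -> (cint y < 0)%E -> (z rho y <= z rho (y + d))%E ->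
  ((- (rho * `|Lf| + `|Lc| * enorm ((enorm d)^-1 *: d - dbar)))%:E <=
     (cext (y + enorm d *: dbar)%R - cext y) * (enorm d)^-1%:E)%E.
Proof.
move=> rho0 d0; set t := enorm d; have t0 : 0 < t by exact: enorm_gt0.
move=> f_lip cext_lip hy hyd hydb cint_le cint_neg z_le.
have [fy _] := f_lip _ _ hy hy.
have [fyd f_diff] := f_lip _ _ hyd hy.
have [ey _] := cext_lip _ _ hy hy.
have [eyd _] := cext_lip _ _ hyd hy.
have [eydb cext_diff] := cext_lip _ _ hydb hyd.
have merit := zmerit_le_cext rho0 cint_le cint_neg fy fyd ey eyd z_le.
rewrite -(fineK eydb) -(fineK ey) -EFinB -EFinM lee_fin ler_pdivlMr //.
rewrite addrAC subrr add0r -/t in f_diff.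
rewrite (_ : y + t *: dbar - (y + d) = t *: (dbar - t^-1 *: d)) in cext_diff; last first.
  by rewrite opprD addrACA subrr add0r scalerBr scalerA divff ?gt_eqF // scale1r.
rewrite enormZ (gtr0_norm t0) in cext_diff.
rewrite enorm_distC in cext_diff.
set nu := enorm (t^-1 *: d - dbar) in cext_diff *.
have nu0 : 0 <= nu by exact: enorm_ge0.
have f_step : rho * (fine (f (y + d)) - fine (f y)) <= rho * (`|Lf| * t).
  rewrite ler_pM2l //; apply: le_trans (ler_norm _) (le_trans f_diff _).
  by apply: ler_wpM2r; [exact: ltW | exact: ler_norm].
have Lc_step : Lc * (t * nu) <= `|Lc| * (t * nu).
  by apply: ler_wpM2r; [exact: mulr_ge0 (ltW t0) nu0 | exact: ler_norm].
have := ler_norm (fine (cext (y + d)) - fine (cext (y + t *: dbar))).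
rewrite distrC => cext_le; lra.
Qed.

End MeritFunction.

Section MadsPipIterates.
Context {R : realType} {n m p : nat}.
Context {f : 'rV[R]_n -> \bar R} {g : 'I_m -> 'rV[R]_n -> \bar R}
  {h : 'I_p -> 'rV[R]_n -> \bar R} {Gint : {set 'I_m}}.
Context {x0 : 'rV[R]_n} {rho0 theta_rho Delta0 theta_Delta beta : R}
  {x : nat -> 'rV[R]_n} {Delta rho : nat -> R} {S D : nat -> seq 'rV[R]_n}.
Hypothesis alg : mads_pip f g h Gint x0 rho0 theta_rho Delta0 theta_Delta beta x Delta rho S D.
Local Notation cint := (cint g Gint).
Local Notation cext := (cext g h Gint).
Local Notation z := (zmerit f g h Gint).

Lemma mads_pip_parameters :
  [/\ 0 < rho0, 0 < theta_rho < 1, 0 < theta_Delta, 1 < beta & rho 0%N = rho0].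
Proof.
have [_ [_ [rho0_gt0 [theta_rho01 [_ [/andP[theta_Delta_gt0 _]
  [_ [beta_gt1 [_ [_ [rho_0 _]]]]]]]]]]] := alg.
by split.
Qed.

Lemma rho_next k : rho k.+1 = rho k \/ rho k.+1 = theta_rho * rho k.
Proof.
have [_ [_ [_ [_ [_ [_ [_ [_ [_ [_ [_ /(_ k) /= step]]]]]]]]]]] := alg.
case: step => _ [[s _ [_ [_ [_ ->]]]] | [_ [_ [[dd _ [_ [_ [_ ->]]]] | [_ [_ [_ ->]]]]]]];
  try by left.
by case: ifP; [right | left].
Qed.

Lemma rho_gt0 k : 0 < rho k.
Proof.
have [rho0_gt0 /andP[theta_gt0 _] _ _ rho_0] := mads_pip_parameters.
elim: k => [|k IH]; first by rewrite rho_0.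
by case: (rho_next k) => ->; rewrite ?mulr_gt0.
Qed.

Lemma rho_nonincreasing : {homo rho : a b / (a <= b)%N >-> b <= a}.
Proof.
apply/nonincreasing_seqP => k.
have [_ /andP[_ theta_lt1] _ _ _] := mads_pip_parameters.
by case: (rho_next k) => -> //; have := rho_gt0 k; nra.
Qed.

Lemma path_following_rho k : path_following rho k -> rho k.+1 = theta_rho * rho k.
Proof. by rewrite /path_following; case: (rho_next k) => ->; rewrite ?ltxx. Qed.

(* Each iterate has finite merit (x_0 by assumption, later ones by strict decrease),
   which forces c^int < 0. *)
Lemma iterate_cint_lt0 k : (cint (x k) < 0)%E.
Proof.
have [_ [z0 [_ [_ [_ [_ [_ [_ [x_0 [_ [_ step]]]]]]]]]]] := alg.
have z_lt_cint r y w : (z r y < w)%E -> (cint y < 0)%E.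
  by rewrite /zmerit; case: ifP => // _; rewrite ltNge leey.
elim: k => [|k IH]; first by rewrite x_0; exact: z_lt_cint z0.
have /= [_ [[s _ [zs [-> _]]] | [_ [_ [[dd _ [zs [-> _]]] | [_ [-> _]]]]]]] := step k => //;
  exact: z_lt_cint zs.
Qed.

Lemma path_following_poll {k} : path_following rho k ->
  [/\ forall d, d \in D k -> (z (rho k) (x k) <= z (rho k) (x k + d))%E,
      forall d, d \in D k -> d != 0 /\ enorm d <= Delta k
    & theta_Delta * Delta k <= powR (rho k) beta].
Proof.
have [_ [_ [_ [_ [_ [_ [_ [_ [_ [_ [_ /(_ k) /= step]]]]]]]]]]] := alg.
rewrite /path_following.
case: step => _ [[s _ [_ [_ [_ ->]]]] | [_ [D_frame [[dd _ [_ [_ [_ ->]]]] | ]]]];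
  try by rewrite ltxx.
move=> [no_descent [_ [-> ->]]].
case: ifP => [Delta_le _ | _]; last by rewrite ltxx.
split.
- by move=> d /no_descent; rewrite leNgt => /negP.
- by move=> d /D_frame [d0 [_ frame]]; rewrite (addrC (x k)) addrK in frame.
- by move: Delta_le; rewrite le_min lee_fin => /andP[].
Qed.

Lemma poll_step_le {k d} : path_following rho k -> d \in D k -> rho k <= 1 ->
  enorm d <= rho k / theta_Delta.
Proof.
move=> pf dD rho_le1.
have [_ _ theta_gt0 beta_gt1 _] := mads_pip_parameters.
have [_ D_frame Delta_le] := path_following_poll pf.
have [_ d_le] := D_frame d dD.
rewrite ler_pdivlMr // mulrC; apply: le_trans (ler_wpM2l (ltW theta_gt0) d_le) _.
apply: le_trans Delta_le _; apply: ge1r_powR; [by rewrite rho_gt0 | exact: ltW].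
Qed.

Context {sig : nat -> nat}.
Hypotheses (sig_incr : forall j, (sig j < sig j.+1)%N)
  (sig_path : forall j, path_following rho (sig j)).

Lemma rho_subseq_le j : rho (sig j) <= theta_rho ^+ j * rho0.
Proof.
have [_ /andP[theta_gt0 _] _ _ rho_0] := mads_pip_parameters.
elim: j => [|j IH]; first by rewrite expr0 mul1r -rho_0 rho_nonincreasing.
apply: le_trans (rho_nonincreasing _ _ (sig_incr j)) _.
by rewrite path_following_rho // exprS -mulrA ler_pM2l.
Qed.

Lemma rho_subseq_near e : 0 < e -> \forall j \near \oo, rho (sig j) < e.
Proof.
move=> e0; have [rho0_gt0 /andP[theta_gt0 theta_lt1] _ _ _] := mads_pip_parameters.
have theta_norm : `|theta_rho| < 1 by rewrite gtr0_norm.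
have [N _ theta_N] := cvgr0_norm_lt _ (cvg_expr theta_norm) _ (divr_gt0 e0 rho0_gt0).
exists N => // j /theta_N /=; rewrite gtr0_norm ?exprn_gt0 // ltr_pdivlMr // => theta_j.
exact: le_lt_trans (rho_subseq_le j) theta_j.
Qed.

Context {d : nat -> 'rV[R]_n} {xbar dbar : 'rV[R]_n}.
Hypotheses (poll_dir : forall j, d j \in D (sig j))
  (x_cvg : vcvg (fun j => x (sig j)) xbar)
  (dir_cvg : vcvg (fun j => (enorm (d j))^-1 *: d j) dbar)
  (cint_poll : forall j, (cint (x (sig j) + d j) <= cint (x (sig j)))%E).

Lemma poll_step_near e : 0 < e -> \forall j \near \oo, enorm (d j) < e.
Proof.
move=> e0; have [_ _ theta_gt0 _ _] := mads_pip_parameters.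
have eps0 : 0 < Num.min 1 (theta_Delta * e) by rewrite lt_min ltr01 mulr_gt0.
apply: filterS _ (rho_subseq_near _ eps0) => j; rewrite lt_min => /andP[rho_lt1 rho_lt].
apply: le_lt_trans (poll_step_le (sig_path j) (poll_dir j) (ltW rho_lt1)) _.
by rewrite ltr_pdivrMr // mulrC.
Qed.

Lemma cext_quotient_near (r Lf Lc : R) : 0 < r ->
  lipschitz_on_ball f xbar r Lf -> lipschitz_on_ball cext xbar r Lc ->
  forall e, 0 < e -> \forall j \near \oo,
    [/\ enorm (x (sig j) - xbar) < e, 0 < enorm (d j), enorm (d j) < e &
        ((- e)%:E <= (cext (x (sig j) + enorm (d j) *: dbar)%R - cext (x (sig j)))
                     * (enorm (d j))^-1%:E)%E].
Proof.
move=> r0 f_lip cext_lip e e0.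
have e2 : 0 < e / 2 by rewrite divr_gt0.
have D1_gt0 (a : R) : 0 <= a -> 0 < a + 1 by move=> a0; rewrite ltr_wpDl.
near=> j.
(* x_k within r/2 of xbar and ||d_k|| (1 + ||dbar||) < r/2 keep x_k, x_k + d_k and
   x_k + ||d_k|| dbar in the Lipschitz ball. *)
have /andP[y_e y_r] : (enorm (x (sig j) - xbar) < e) && (enorm (x (sig j) - xbar) < r / 2).
  by rewrite -lt_min; near: j; apply: vcvg_near _ _ x_cvg _ _; rewrite lt_min e0 divr_gt0.
have /andP[t_e t_r] : (enorm (d j) < e) && (enorm (d j) < r / 2 / (enorm dbar + 1)).
  rewrite -lt_min; near: j; apply: poll_step_near.
  by rewrite lt_min e0 !divr_gt0 ?D1_gt0 ?enorm_ge0.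
have rho_Lf : rho (sig j) * `|Lf| <= e / 2.
  near: j; apply: filterS _ (rho_subseq_near _ (divr_gt0 e2 (D1_gt0 _ (normr_ge0 Lf)))) => k.
  exact: mulr_le_of_lt_divD1 (ltW (rho_gt0 _)) (normr_ge0 _).
have Lc_nu : `|Lc| * enorm ((enorm (d j))^-1 *: d j - dbar) <= e / 2.
  near: j; apply: filterS _ (vcvg_near _ _ dir_cvg _
    (divr_gt0 e2 (D1_gt0 _ (normr_ge0 Lc)))) => k.
  by rewrite (mulrC `|Lc|); exact: mulr_le_of_lt_divD1 (enorm_ge0 _) (normr_ge0 _).
have [descent D_frame _] := path_following_poll (sig_path j).
have [dj0 _] := D_frame _ (poll_dir j).
have t0 : 0 < enorm (d j) by exact: enorm_gt0.
have tdbar : enorm (d j) + enorm (d j) * enorm dbar < r / 2.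
  by move: t_r; rewrite ltr_pdivlMr ?D1_gt0 ?enorm_ge0 // mulrDr mulr1 addrC.
have dbar0 := mulr_ge0 (ltW t0) (enorm_ge0 dbar).
have hy : enorm (x (sig j) - xbar) < r by lra.
have hyd : enorm (x (sig j) + d j - xbar) < r.
  by rewrite addrAC; apply: le_lt_trans (enormD _ _) _; lra.
have hydb : enorm (x (sig j) + enorm (d j) *: dbar - xbar) < r.
  by rewrite addrAC; apply: le_lt_trans (enormD _ _) _; rewrite enormZ gtr0_norm //; lra.
split => //; apply: le_trans _ (cext_quotient_lower (rho_gt0 _) dj0 f_lip cext_lip
  hy hyd hydb (cint_poll j) (iterate_cint_lt0 _) (descent _ (poll_dir j))).
by rewrite lee_fin lerN2; lra.
Unshelve. all: by end_near.
Qed.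

End MadsPipIterates.

Theorem mainTheorem5 (R : realType) (n m p : nat)
  (f : 'rV[R]_n -> \bar R) (g : 'I_m -> 'rV[R]_n -> \bar R)
  (h : 'I_p -> 'rV[R]_n -> \bar R) (Gint : {set 'I_m})
  (hf : forall x, f x != -oo%E)
  (hg : forall l x, g l x != -oo%E)
  (hh : forall j x, h j x != -oo%E)
  (x0 : 'rV[R]_n) (rho0 theta_rho Delta0 theta_Delta beta : R)
  (x : nat -> 'rV[R]_n) (Delta rho : nat -> R) (S D : nat -> seq 'rV[R]_n)
  (xbar dbar : 'rV[R]_n) :
  bounded_level_sets f ->
  mads_pip f g h Gint x0 rho0 theta_rho Delta0 theta_Delta beta x Delta rho S D ->
  end_path_point rho x xbar ->
  path_refining g Gint rho x D xbar dbar ->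
  lipschitz_near f xbar ->
  lipschitz_near (cint g Gint) xbar ->
  lipschitz_near (cext g h Gint) xbar ->
  (0 <= clarke_dd (cext g h Gint) xbar dbar)%E.
Proof.
move=> _ alg _ [sig [d [sig_incr [sig_path [x_cvg [poll_dir [dir_cvg cint_poll]]]]]]]
  [rf [rf0 [Lf f_lip]]] _ [rc [rc0 [Lc cext_lip]]].
have r0 : 0 < Num.min rf rc by rewrite lt_min rf0 rc0.
apply: (clarke_dd_ge0 _ _ _ (fun j => x (sig j)) (fun j => enorm (d j))).
apply: (cext_quotient_near alg sig_incr sig_path poll_dir x_cvg dir_cvg cint_poll _ _ _ r0).
- by apply: lipschitz_on_ball_le; [exact: f_lip | rewrite ge_min lexx].
- by apply: lipschitz_on_ball_le; [exact: cext_lip | rewrite ge_min lexx orbT].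
Qed.
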